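(* The polynomials $a_0,\Delta,\beta,\gamma_0$ satisfy $$\beta^2=a_0^q\gamma_0+\Delta\left(\Delta^{\frac{q-1}{2}}-a_0^{q-1}\right)^2.$$
   Context: Let $p>2$ be a prime, $q=p^n$, and $\mathbb{F}$ a field of characteristic $p$ containing $\mathbb{F}_q$. In $\mathbb{F}[a_0,a_1,a_2]$ define $\Delta=a_1^2-a_0a_2$, $\beta=\prod_{c\in\mathbb{F}_q}(a_1+ca_0)=a_1^q-a_0^{q-1}a_1$, and $\gamma_0=\prod_{c\in\mathbb{F}_q}(a_2+2ca_1+c^2a_0)$. *)

From HB Require Import structures.
From mathcomp Require Import all_boot all_order all_algebra all_field.
From mathcomp Require Import mpoly.
Set Implicit Arguments. Unset Strict Implicit. Unset Printing Implicit Defensive.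
Import GRing.Theory.
Local Open Scope ring_scope.

(* Polynomial ring F[a0,a1,a2] = {mpoly F[3]}.  F_q is given as a finite
   field K together with a ring embedding f : K -> F. *)
Definition a0 (F : fieldType) : {mpoly F[3]} := 'X_(0 : 'I_3).
Definition a1 (F : fieldType) : {mpoly F[3]} := 'X_(1 : 'I_3).
Definition a2 (F : fieldType) : {mpoly F[3]} := 'X_(2 : 'I_3).

Definition Delta (F : fieldType) : {mpoly F[3]} := a1 F ^+ 2 - a0 F * a2 F.

Definition beta (K : finFieldType) (F : fieldType) (f : {rmorphism K -> F})
  : {mpoly F[3]} := \prod_(c : K) (a1 F + f c *: a0 F).

Definition gamma0 (K : finFieldType) (F : fieldType) (f : {rmorphism K -> F})
  : {mpoly F[3]} :=
  \prod_(c : K) (a2 F + (2 * f c) *: a1 F + (f c ^+ 2) *: a0 F).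

From HB Require Import structures.
From mathcomp Require Import all_boot abelian all_order all_algebra all_field.
From mathcomp Require Import mpoly ring.

Set Implicit Arguments.
Unset Strict Implicit.
Unset Printing Implicit Defensive.

Import GRing.Theory.
Local Open Scope ring_scope.

(* Since a0 (a2 + 2 c a1 + c^2 a0) = (a1 + c a0)^2 - Delta, the product a0^q gamma0
   is prod_c ((a1 + c a0)^2 - Delta).  With Delta replaced by X^2 in a polynomial
   ring, each factor splits as (a1 - X + c a0) (a1 + X + c a0); the product over
   F_q of (y + c x) is y^q - x^(q-1) y (from X^q - X = prod_c (X - c)), and the
   Frobenius gives (a1 -+ X)^q = a1^q -+ X^q.  This evaluates the product to
   beta^2 - X^2 (X^(q-1) - a0^(q-1))^2, and substituting X^2 back to Delta gives the
   identity.  Dividing by a0 is done in the fraction field of F[a0,a1,a2]. *)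

Section FiniteFieldProducts.
Variable K : finFieldType.
Local Notation q := #|K|.

Lemma pnat_card_ffield (R : nzRingType) (g : {rmorphism K -> R}) :
  [pchar R].-nat q.
Proof.
have [p _ pK] := finPcharP K.
rewrite (eq_pnat _ (pcharf_eq (rmorph_pchar g pK))) -cardsT.
exact: abelem_pgroup (fin_ring_pchar_abelem pK).
Qed.

Lemma prod_add_ffield (R : comNzRingType) (g : {rmorphism K -> R}) (y : R) :
  \prod_(c : K) (y + g c) = y ^+ q - y.
Proof.
have genPoly : \prod_(c : K) ('X + c%:P) = 'X^q - 'X :> {poly K}.
  rewrite finField_genPoly (reindex_inj (@oppr_inj _)) /=.
  by apply: eq_bigr => c _; rewrite polyCN.
have := congr1 (fun P => (map_poly g P).[y]) genPoly.
rewrite /= rmorph_prod horner_prod rmorphB /= map_polyXn map_polyX !hornerE => <-.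
by apply: eq_bigr => c _; rewrite rmorphD /= map_polyX map_polyC !hornerE.
Qed.

Lemma prod_add_scale_ffield (R : comUnitRingType) (g : {rmorphism K -> R}) (x y : R) :
  x \is a GRing.unit -> \prod_(c : K) (y + g c * x) = y ^+ q - x ^+ q.-1 * y.
Proof.
move=> Ux; have q_gt0 : (0 < q)%N := ltnW (finNzRing_gt1 K).
rewrite (eq_bigr (fun c => x * (y / x + g c))) => [|c _]; last first.
  by rewrite mulrDr [x * _]mulrC divrK // mulrC.
rewrite big_split /= prodr_const prod_add_ffield mulrBr -exprMn [x * _]mulrC divrK //.
rewrite -{2}(prednK q_gt0) exprS [x * _]mulrC -mulrA [x * (y / x)]mulrC divrK //.
Qed.

Lemma prod_sqr_sub_ffield (L : fieldType) (g : {rmorphism K -> L}) (x y d : L) :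
  odd q -> x != 0 ->
  \prod_(c : K) ((y + g c * x) ^+ 2 - d) =
    (y ^+ q - x ^+ q.-1 * y) ^+ 2 - d * (d ^+ q.-1./2 - x ^+ q.-1) ^+ 2.
Proof.
move=> q_odd x_neq0; set m := q.-1./2.
have q_gt0 : (0 < q)%N := ltnW (finNzRing_gt1 K).
have q_eq : q = m.*2.+1.
  move: q_odd; rewrite -{1 2}(prednK q_gt0) oddS => /negbTE q1_even.
  by rewrite -(odd_double_half q.-1) q1_even.
pose U := \prod_(c : K) ((y + g c * x)%:P ^+ 2 - 'X) : {poly L}.
pose V := ((y ^+ q - x ^+ q.-1 * y) ^+ 2)%:P
          - 'X * ('X^m - (x ^+ q.-1)%:P) ^+ 2 : {poly L}.
have UV_X2 : U \Po 'X^2 = V \Po 'X^2.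
  pose gP := (polyC \o g)%FUN : {rmorphism K -> {poly L}}.
  have xP_unit : x%:P \is a GRing.unit by rewrite rmorph_unit ?unitfE.
  have qP := pnat_card_ffield gP.
  rewrite /U rmorph_prod /=.
  transitivity (\prod_(c : K)
     ((y%:P - 'X + gP c * x%:P) * (y%:P + 'X + gP c * x%:P))).
    apply: eq_bigr => c _.
    rewrite comp_polyB comp_polyX rmorphXn /= (comp_polyC (y + g c * x)).
    by rewrite rmorphD rmorphM /=; ring.
  rewrite big_split !prod_add_scale_ffield // !exprDn_pchar // exprNn_pchar //.
  rewrite /V comp_polyB comp_polyM comp_polyX !rmorphXn /=.
  rewrite (comp_polyC (y ^+ q - _)) comp_polyB !rmorphXn /= comp_polyX (comp_polyC x).
  rewrite [in 'X^q]q_eq exprS -mul2n exprM rmorphB rmorphXn rmorphM rmorphXn /=.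
  ring.
have UV : U = V.
  apply/eqP; rewrite -subr_eq0 -(@comp_poly_eq0 _ _ 'X^2) ?size_polyXn //.
  by rewrite comp_polyB UV_X2 subrr.
have := congr1 (horner^~ d) UV.
rewrite /U /V horner_prod !hornerE => <-.
by apply: eq_bigr => c _; rewrite !hornerE.
Qed.

Lemma beta_sqr_ffield (L : fieldType) (g : {rmorphism K -> L}) (A0 A1 A2 : L) :
  odd q -> A0 != 0 ->
  let D := A1 ^+ 2 - A0 * A2 in
  (\prod_(c : K) (A1 + g c * A0)) ^+ 2 =
    A0 ^+ q * \prod_(c : K) (A2 + 2 * g c * A1 + g c ^+ 2 * A0)
    + D * (D ^+ q.-1./2 - A0 ^+ q.-1) ^+ 2.
Proof.
move=> q_odd A0_neq0 D.
have gamma_factor c :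
  A0 * (A2 + 2 * g c * A1 + g c ^+ 2 * A0) = (A1 + g c * A0) ^+ 2 - D.
  by rewrite /D; ring.
have -> : A0 ^+ q * \prod_(c : K) (A2 + 2 * g c * A1 + g c ^+ 2 * A0)
          = \prod_(c : K) ((A1 + g c * A0) ^+ 2 - D).
  by rewrite -(eq_bigr _ (fun c _ => gamma_factor c)) big_split prodr_const.
by rewrite prod_sqr_sub_ffield // -(prod_add_scale_ffield g) ?unitfE // subrK.
Qed.

Lemma beta_sqr_idomain (R : idomainType) (g : {rmorphism K -> R}) (A0 A1 A2 : R) :
  odd q -> A0 != 0 ->
  let D := A1 ^+ 2 - A0 * A2 in
  (\prod_(c : K) (A1 + g c * A0)) ^+ 2 =
    A0 ^+ q * \prod_(c : K) (A2 + 2 * g c * A1 + g c ^+ 2 * A0)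
    + D * (D ^+ q.-1./2 - A0 ^+ q.-1) ^+ 2.
Proof.
move=> q_odd A0_neq0 D; apply/eqP; rewrite -tofrac_eq; apply/eqP.
rewrite /D !(rmorphB, rmorphD, rmorphXn, rmorphM, rmorph_prod).
under [in LHS]eq_bigr do rewrite !(rmorphD, rmorphM).
under [in RHS]eq_bigr do rewrite !(rmorphD, rmorphM, rmorphXn, rmorph_nat).
have := @beta_sqr_ffield _ (@tofrac R \o g)%FUN (tofrac A0) (tofrac A1) (tofrac A2) q_odd.
by rewrite tofrac_eq0 => /(_ A0_neq0) beta_sqr; apply: beta_sqr.
Qed.

End FiniteFieldProducts.

Theorem lemma2p2 (p n : nat) (K : finFieldType) (F : fieldType)
    (f : {rmorphism K -> F}) :
  prime p -> (2 < p)%N -> #|K| = (p ^ n)%N ->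
  beta f ^+ 2 =
    a0 F ^+ (p ^ n) * gamma0 f
    + Delta F * (Delta F ^+ ((p ^ n).-1./2) - a0 F ^+ (p ^ n).-1) ^+ 2.
Proof.
move=> p_prime p_gt2 qE.
have q_odd : odd #|K|.
  have [p2 | p_odd] := even_prime p_prime; first by rewrite p2 in p_gt2.
  by rewrite qE oddX p_odd orbT.
pose g : {rmorphism K -> {mpoly F[3]}} := (@mpolyC 3 F \o f)%FUN.
have a0_neq0 : a0 F != 0.
  apply/eqP => /(congr1 (meval (fun=> 1 : F))).
  by rewrite /a0 mevalXU meval0 => /eqP; rewrite oner_eq0.
have -> : beta f = \prod_(c : K) (a1 F + g c * a0 F).
  by apply: eq_bigr => c _; rewrite mul_mpolyC.
have -> : gamma0 f = \prod_(c : K) (a2 F + 2 * g c * a1 F + g c ^+ 2 * a0 F).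
  by apply: eq_bigr => c _; rewrite -!mul_mpolyC rmorphM rmorphXn rmorph_nat.
by rewrite -qE; apply: beta_sqr_idomain.
Qed.
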